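(* Let $\alpha\in(\tfrac12,1)$, $x'\in\mathbb{R}^d$, and let $f:\mathbb{R}^d\to\mathbb{R}$ be differentiable with $\nabla f$ $\alpha$-Hölder continuous. Then $$\sup_{r>0}\frac{1}{r^{2\alpha}}\inf_{B,b}\big\|\nabla f-B_{x'}\big\|_{B_r(x')}\le C\sup_{l>0}\frac{1}{l^{2\alpha}}\sup_{|y|\le l}\inf_{k\in\mathbb{R}^d}\big\|\nabla\delta_yf-k\big\|_{B_l(x')},$$ where the infimum on the left is over symmetric $B\in\mathbb{R}^{d\times d}$ and $b\in\mathbb{R}^d$, $B_{x'}(x):=B(x-x')+b$, and $C$ depends only on $d$ and $\alpha$.
   Context: $\delta_yf(x):=f(x+y)-f(x)$ (applied entrywise to vector fields). $\|\cdot\|_{B_r(x')}$ denotes the supremum norm over the ball $B_r(x')$ (for vector-valued functions, of the Euclidean norm). *)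

From HB Require Import structures.
From mathcomp Require Import all_boot all_order all_algebra.
From mathcomp Require Import all_classical all_reals all_analysis.
Set Implicit Arguments. Unset Strict Implicit. Unset Printing Implicit Defensive.
Import Order.TTheory GRing.Theory Num.Theory.
Import numFieldNormedType.Exports.
Local Open Scope classical_set_scope.
Local Open Scope ring_scope.

Definition enorm {R : realType} {d : nat} (v : 'rV[R]_d) : R :=
  Num.sqrt (\sum_(i < d) v 0 i ^+ 2).

Definition grad {R : realType} {d : nat} (f : 'rV[R]_d -> R) (x : 'rV[R]_d)
  : 'rV[R]_d := \row_(i < d) ('d f x (delta_mx 0 i : 'rV[R]_d)).

Definition fdelta {R : realType} {d : nat} (y : 'rV[R]_d) (f : 'rV[R]_d -> R)
  : 'rV[R]_d -> R := fun x => f (x + y) - f x.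

Definition ball_supnorm {R : realType} {d : nat} (F : 'rV[R]_d -> 'rV[R]_d)
  (x' : 'rV[R]_d) (r : R) : \bar R :=
  ereal_sup [set (enorm (F x))%:E | x in [set x | enorm (x - x') < r]].

Definition grad_holder {R : realType} {d : nat} (alpha : R) (f : 'rV[R]_d -> R) :=
  exists M : R, forall x y : 'rV[R]_d,
    enorm (grad f x - grad f y) <= M * powR (enorm (x - y)) alpha.

Definition lhs_quantity {R : realType} {d : nat} (alpha : R)
  (f : 'rV[R]_d -> R) (x' : 'rV[R]_d) : \bar R :=
  ereal_sup ((fun r : R => ((powR r (2 * alpha))^-1)%:E *
     ereal_inf ((fun Bb : 'M[R]_d * 'rV[R]_d =>
                   ball_supnorm (fun x => (grad f x - ((x - x') *m Bb.1^T + Bb.2))%R) x' r)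
               @` [set Bb : 'M[R]_d * 'rV[R]_d | (Bb.1^T = Bb.1)%R]))%E
   @` [set r : R | (0 < r)%R]).

Definition rhs_quantity {R : realType} {d : nat} (alpha : R)
  (f : 'rV[R]_d -> R) (x' : 'rV[R]_d) : \bar R :=
  ereal_sup ((fun l : R => ((powR l (2 * alpha))^-1)%:E *
     ereal_sup ((fun y : 'rV[R]_d =>
        ereal_inf ((fun k : 'rV[R]_d =>
                      ball_supnorm (fun x => (grad (fdelta y f) x - k)%R) x' l)
                   @` [set: 'rV[R]_d]))
        @` [set y : 'rV[R]_d | (enorm y <= l)%R]))%E
   @` [set l : R | (0 < l)%R]).

(* Let M bound the right-hand side and fix a coordinate i.  The function
   phi z := d_i f (x' + z) - d_i f x' is almost additive:
   |phi (x + y) - phi x - phi y| <= 2 M l^(2 alpha) when |x| < l and |y| <= l,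
   because both increments of grad (delta_y f) involved lie within
   M l^(2 alpha) of one constant on B_l(x').  As 2 alpha > 1, the Hyers
   rescalings 2^n phi (2^-n z) converge to an additive map which, phi being
   Hoelder, is linear and stays within C M |z|^(2 alpha) of phi.  Collecting
   these linear maps as the rows of a matrix B, the mean value theorem applied
   to the mixed second difference of f at scale s gives
   |B i j - B j i| = O(s^(2 alpha - 1)), so B is symmetric, and the affine map
   B (x - x') + grad f x' witnesses the bound on the left-hand side. *)

From HB Require Import structures.
From mathcomp Require Import all_boot all_order all_algebra.
From mathcomp Require Import all_classical all_reals all_analysis.
From mathcomp Require Import ring lra.
Import Order.TTheory GRing.Theory Num.Theory.
Import numFieldNormedType.Exports.
Local Open Scope classical_set_scope.
Local Open Scope ring_scope.
Set Implicit Arguments. Unset Strict Implicit. Unset Printing Implicit Defensive.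

Section EuclideanNorm.
Variables (R : realType) (d : nat).
Implicit Types (u v w : 'rV[R]_d).

Lemma enorm_ge0 v : 0 <= enorm v.
Proof. exact: sqrtr_ge0. Qed.

Lemma ler_coord_enorm v i : `|v 0 i| <= enorm v.
Proof.
rewrite /enorm -sqrtr_sqr ler_sqrt; last by apply: sumr_ge0 => k _; exact: sqr_ge0.
rewrite (bigD1 i) //= lerDl; apply: sumr_ge0 => k _; exact: sqr_ge0.
Qed.

Lemma ler_coord_dist v w i : `|v 0 i - w 0 i| <= enorm (v - w).
Proof. by have := ler_coord_enorm (v - w) i; rewrite !mxE. Qed.

Lemma ler_coord_dist3 u v w i : `|u 0 i - v 0 i - w 0 i| <= enorm (u - v - w).
Proof. by have := ler_coord_enorm (u - v - w) i; rewrite !mxE. Qed.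

Lemma coord_sub_add u v w i : (u - (v + w)) 0 i = u 0 i - w 0 i - v 0 i.
Proof. by rewrite !mxE; ring. Qed.

Lemma enormZ c v : enorm (c *: v) = `|c| * enorm v.
Proof.
rewrite /enorm -sqrtr_sqr -sqrtrM ?sqr_ge0 //; congr Num.sqrt.
by rewrite mulr_sumr; apply: eq_bigr => k _; rewrite mxE exprMn.
Qed.

Lemma enorm0 : enorm (0 : 'rV[R]_d) = 0.
Proof. by rewrite -(scale0r (0 : 'rV[R]_d)) enormZ normr0 mul0r. Qed.

Lemma enorm_gt0 v : v != 0 -> 0 < enorm v.
Proof.
apply: contraNT; rewrite -leNgt /enorm => enorm_le0.
have : Num.sqrt (\sum_(k < d) v 0 k ^+ 2) == 0 by rewrite eq_le enorm_le0 sqrtr_ge0.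
rewrite sqrtr_eq0 => sum_le0.
have /psumr_eq0P sq0 : \sum_(k < d) v 0 k ^+ 2 = 0.
  by apply/eqP; rewrite eq_le sum_le0 sumr_ge0 // => k _; exact: sqr_ge0.
apply/eqP/rowP => k; rewrite mxE; apply/eqP.
by rewrite -sqrf_eq0 sq0 // => j _; exact: sqr_ge0.
Qed.

Definition l1norm v := \sum_(k < d) `|v 0 k|.

Lemma enorm_le_l1norm v : enorm v <= l1norm v.
Proof.
have l1_ge0 : 0 <= l1norm v by apply: sumr_ge0 => k _; exact: normr_ge0.
rewrite /enorm -(ger0_norm l1_ge0) -sqrtr_sqr ler_sqrt ?sqr_ge0 //.
rewrite expr2 mulr_suml; apply: ler_sum => k _.
rewrite -(real_normK (num_real (v 0 k))) expr2 ler_wpM2l //.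
rewrite /l1norm (bigD1 k) //= lerDl; apply: sumr_ge0 => j _; exact: normr_ge0.
Qed.

Lemma l1normD v w : l1norm (v + w) <= l1norm v + l1norm w.
Proof.
by rewrite /l1norm -big_split /=; apply: ler_sum => k _; rewrite mxE ler_normD.
Qed.

Lemma l1normZ c v : l1norm (c *: v) = `|c| * l1norm v.
Proof. by rewrite /l1norm mulr_sumr; apply: eq_bigr => k _; rewrite mxE normrM. Qed.

Lemma l1norm_delta i : l1norm (delta_mx 0 i) = 1.
Proof.
rewrite /l1norm (bigD1 i) //= big1 ?addr0; first by rewrite mxE !eqxx normr1.
by move=> k /negbTE ki; rewrite mxE ki andbF normr0.
Qed.

Lemma enorm_le_coord v c : (forall i, `|v 0 i| <= c) -> enorm v <= d%:R * c.
Proof.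
move=> vc; apply: le_trans (enorm_le_l1norm v) _.
apply: le_trans (ler_sum _ (fun k _ => vc k)) _.
by rewrite sumr_const card_ord mulr_natl.
Qed.

End EuclideanNorm.

Section Geometric.
Variable R : realType.

Lemma geometric_bound_eq0 (a E q : R) : 0 <= q < 1 ->
  (forall n, `|a| <= E * q ^+ n) -> a = 0.
Proof.
move=> /andP[q0 q1] aE; apply/eqP; apply: contraT => a0.
have a_gt0 : 0 < `|a| by rewrite normr_gt0.
have E_gt0 : 0 < `|E| + 1 by rewrite ltr_pwDr ?normr_ge0.
have qn_cvg : (fun n => q ^+ n) @ \oo --> (0 : R) by apply: cvg_expr; rewrite ger0_norm.
have [N _ qN] := cvgr0_norm_lt _ qn_cvg _ (divr_gt0 a_gt0 E_gt0).
have {qN} /= := qN N (leqnn N); rewrite ger0_norm ?exprn_ge0 // => qN.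
have : E * q ^+ N <= `|E| * q ^+ N by rewrite ler_wpM2r ?exprn_ge0 // ler_norm.
have : `|E| * q ^+ N <= `|E| * (`|a| / (`|E| + 1)) by rewrite ler_wpM2l ?normr_ge0 ?ltW.
have : `|E| * (`|a| / (`|E| + 1)) < `|a| by rewrite mulrA ltr_pdivrMr //; nra.
by have := aE N; lra.
Qed.

Lemma geometric_cauchy_limit (u : nat -> R) (c q : R) : 0 <= c -> 0 <= q -> q < 1 ->
  (forall n, `|u n.+1 - u n| <= c * q ^+ n) ->
  exists a, forall n, `|a - u n| <= c / (1 - q) * q ^+ n.
Proof.
move=> c0 q0 q1 du.
pose e n := c / (1 - q) * q ^+ n.
have e_ge0 n : 0 <= e n by rewrite /e !mulr_ge0 ?exprn_ge0 ?invr_ge0 // subr_ge0 ltW.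
have eS n : e n - e n.+1 = c * q ^+ n by rewrite /e exprS; field; lra.
have du_tail n k : `|u (n + k)%N - u n| <= e n - e (n + k)%N.
  elim: k => [|k IH]; first by rewrite addn0 !subrr normr0.
  rewrite addnS; have := ler_normD (u (n + k).+1 - u (n + k)%N) (u (n + k)%N - u n).
  rewrite addrA subrK => /le_trans; apply.
  by have := du (n + k)%N; have := eS (n + k)%N; lra.
(* The limit is the supremum of the nondecreasing sequence u n - e n. *)
pose v n := u n - e n.
have v_ub m n : v m <= u n + e n.
  rewrite /v; case: (leqP n m) => [/subnKC <-|/ltnW /subnKC <-].
    have := du_tail n (m - n)%N; rewrite ler_norml => /andP[_ h].
    by have := e_ge0 (n + (m - n))%N; lra.
  have := du_tail m (n - m)%N; rewrite ler_norml => /andP[h _].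
  by have := e_ge0 (m + (n - m))%N; have := e_ge0 m; lra.
have v_ne : range v !=set0 by exists (v 0%N), 0%N.
exists (sup (range v)) => n; rewrite ler_norml -/(e n); apply/andP; split.
  have : v n <= sup (range v).
    by apply: sup_upper_bound; [split=> //; exists (u 0%N + e 0%N) => _ [m _ <-]|exists n].
  rewrite /v; lra.
have : sup (range v) <= u n + e n by apply: ge_sup => // _ [m _ <-].
lra.
Qed.

Lemma powR_exprn (a r : R) n : 0 <= a -> (a ^+ n) `^ r = (a `^ r) ^+ n.
Proof.
move=> a0; elim: n => [|n IH]; first by rewrite !expr0 powR1.
by rewrite !exprS powRM ?exprn_ge0 // IH.
Qed.

Lemma additive_bounded_linear (D : R -> R) (c : R) :
  {morph D : s u / s + u} -> (forall s, 0 <= s <= 1 -> `|D s| <= c) ->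
  forall t, D t = t * D 1.
Proof.
move=> DD Db.
pose E t := D t - t * D 1.
have ED s u : E (s + u) = E s + E u by rewrite /E DD mulrDl; lra.
have E0 : E 0 = 0 by have := ED 0 0; rewrite addr0; lra.
have E1 : E 1 = 0 by rewrite /E mul1r subrr.
pose c' := c + `|D 1|.
have Eb s : 0 <= s <= 1 -> `|E s| <= c'.
  move=> /andP[s0 s1]; apply: le_trans (ler_normB _ _) _.
  rewrite normrM (ger0_norm s0) lerD ?Db ?s0 ?s1 //.
  by rewrite ler_piMl.
have Eb_nat k s : 0 <= s <= k%:R -> `|E s| <= c'.
  elim: k s => [|k IH] s /andP[s0 sk]; first by apply: Eb; rewrite s0 (le_trans sk).
  have [s1|s1] := lerP s 1; first by apply: Eb; rewrite s0 s1.
  rewrite -(subrK 1 s) ED E1 addr0; apply: IH.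
  by rewrite -natr1 in sk; apply/andP; split; lra.
have Eb_pos s : 0 <= s -> `|E s| <= c'.
  by move=> s0; apply: (Eb_nat (Num.Def.archi_bound s)); rewrite s0 ltW ?archi_boundP.
have E_natM n s : E (n%:R * s) = n%:R * E s.
  elim: n => [|n IH]; first by rewrite !mul0r E0.
  by rewrite -natr1 !mulrDl !mul1r ED IH.
have E_pos s : 0 <= s -> E s = 0.
  move=> s0; apply/eqP; apply: contraT => Es0.
  have Es_gt0 : 0 < `|E s| by rewrite normr_gt0.
  have c'0 : 0 <= c' by apply: le_trans (Eb_pos s s0).
  pose n := Num.Def.archi_bound (c' / `|E s|).
  have : c' / `|E s| < n%:R by apply: archi_boundP; rewrite divr_ge0 ?normr_ge0.
  have := Eb_pos (n%:R * s) (mulr_ge0 (ler0n _ _) s0).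
  by rewrite E_natM normrM ger0_norm ?ler0n // ltr_pdivrMr //; lra.
move=> t; suff : E t = 0 by rewrite /E; lra.
have [t0|t0] := lerP 0 t; first exact: E_pos.
by have := ED t (- t); rewrite addrN E0 (E_pos (- t)) ?oppr_ge0 ?ltW //; lra.
Qed.

(* Halving the scale multiplies the additivity defect by this ratio, which is
   below 1 exactly when alpha > 1/2. *)
Definition holder_ratio (alpha : R) := 2 * 2^-1 `^ (2 * alpha).

Lemma holder_ratio_ge0 alpha : 0 <= holder_ratio alpha.
Proof. by rewrite /holder_ratio mulr_ge0 ?powR_ge0. Qed.

Lemma holder_ratio_exprn alpha n :
  holder_ratio alpha ^+ n = 2 ^+ n * (2^-1 ^+ n) `^ (2 * alpha).
Proof. by rewrite /holder_ratio exprMn powR_exprn // invr_ge0 ler0n. Qed.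

Lemma holder_ratio_lt1 alpha : 2^-1 < alpha -> holder_ratio alpha < 1.
Proof.
move=> ha.
have ln_half : ln (2^-1 : R) < 0 by rewrite ln_lt0 // invr_gt0 /= ?ltr0n // invf_lt1 ?ltr1n.
have : (2^-1 : R) `^ (2 * alpha) < 2^-1.
  rewrite /powR ifF; last by apply/negbTE; rewrite invr_neq0 // pnatr_eq0.
  by rewrite -[X in _ < X]lnK ?posrE ?invr_gt0 ?ltr0n // ltr_expR; nra.
rewrite /holder_ratio; lra.
Qed.

End Geometric.

Section ApproximatelyAdditive.
Variables (R : realType) (d : nat) (phi : 'rV[R]_d -> R) (alpha M H : R).
Hypotheses (alpha_gt : 2^-1 < alpha) (M_ge0 : 0 <= M) (H_ge0 : 0 <= H) (phi0 : phi 0 = 0).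
Hypothesis phi_holder : forall x, `|phi x| <= H * enorm x `^ alpha.
Hypothesis phi_additive_defect : forall l x y, 0 < l -> enorm x < l -> enorm y <= l ->
  `|phi (x + y) - phi x - phi y| <= M * l `^ (2 * alpha).

Local Notation q := (holder_ratio alpha).
Local Notation rho t := (t `^ (2 * alpha)).

Let q_ge0 : 0 <= q := holder_ratio_ge0 alpha.
Let q_lt1 : q < 1 := holder_ratio_lt1 alpha_gt.
Let alpha_ge0 : 0 <= alpha. Proof. by have := alpha_gt; lra. Qed.
Let half_gt0 : 0 < 2^-1 :> R. Proof. by rewrite invr_gt0 ltr0n. Qed.

Let ler_dist_defect (u v w a b c ea eb ec e : R) :
  `|u - a| <= ea -> `|v - b| <= eb -> `|w - c| <= ec -> `|a - b - c| <= e ->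
  `|u - v - w| <= ea + eb + ec + e.
Proof. by rewrite !ler_norml => /andP[? ?] /andP[? ?] /andP[? ?] /andP[? ?]; lra. Qed.

Definition dyadic_rescaling n x := 2 ^+ n * phi (2^-1 ^+ n *: x).

Lemma dyadic_rescaling0 x : dyadic_rescaling 0 x = phi x.
Proof. by rewrite /dyadic_rescaling !expr0 mul1r scale1r. Qed.

Lemma dyadic_rescalingS n x :
  dyadic_rescaling n.+1 x = 2 * dyadic_rescaling n (2^-1 *: x).
Proof. by rewrite /dyadic_rescaling scalerA -exprSr exprS mulrA. Qed.

Lemma dyadic_rescaling_defect n l x y : 0 < l -> enorm x < l -> enorm y <= l ->
  `|dyadic_rescaling n (x + y) - dyadic_rescaling n x - dyadic_rescaling n y|
    <= M * rho l * q ^+ n.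
Proof.
move=> l0 xl yl; set s : R := 2^-1 ^+ n.
have s0 : 0 < s by rewrite exprn_gt0.
rewrite /dyadic_rescaling scalerDr -!mulrBr normrM ger0_norm ?exprn_ge0 // -/s.
have -> : M * rho l * q ^+ n = 2 ^+ n * (M * rho (s * l)).
  by rewrite holder_ratio_exprn powRM ?(ltW s0) ?(ltW l0) //; ring.
rewrite ler_wpM2l ?exprn_ge0 //; apply: phi_additive_defect; first exact: mulr_gt0.
  by rewrite enormZ gtr0_norm // ltr_pM2l.
by rewrite enormZ gtr0_norm // ler_pM2l.
Qed.

Lemma dyadic_rescaling_step n x :
  `|dyadic_rescaling n.+1 x - dyadic_rescaling n x| <= M * rho (enorm x) * q ^+ n.
Proof.
have [->|x0] := eqVneq x 0.
  rewrite /dyadic_rescaling !scaler0 phi0 !mulr0 subrr normr0.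
  by rewrite !mulr_ge0 ?powR_ge0 ?exprn_ge0.
have x_gt0 := enorm_gt0 x0.
have xhalf : enorm (2^-1 *: x) < enorm x.
  by rewrite enormZ gtr0_norm // gtr_pMl // invf_lt1 ?ltr1n.
have -> : dyadic_rescaling n x = dyadic_rescaling n (2^-1 *: x + 2^-1 *: x).
  by rewrite -scalerDl -[2^-1]mul1r -splitr scale1r.
rewrite dyadic_rescalingS distrC mulrDl mul1r opprD addrA.
by apply: dyadic_rescaling_defect; rewrite ?ltW.
Qed.

Lemma dyadic_rescaling_limit : exists A : 'rV[R]_d -> R, forall x n,
  `|A x - dyadic_rescaling n x| <= M / (1 - q) * rho (enorm x) * q ^+ n.
Proof.
suff /boolp.choice[A A_approx] : forall x, exists a, forall n,
    `|a - dyadic_rescaling n x| <= M / (1 - q) * rho (enorm x) * q ^+ n by exists A.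
move=> x; have [|a a_lim] := geometric_cauchy_limit _ q_ge0 q_lt1 (dyadic_rescaling_step ^~ x).
  by rewrite mulr_ge0 ?powR_ge0.
by exists a => n; rewrite [M / _ * _]mulrAC.
Qed.

Section Limit.
Variable A : 'rV[R]_d -> R.
Hypothesis A_approx : forall x n,
  `|A x - dyadic_rescaling n x| <= M / (1 - q) * rho (enorm x) * q ^+ n.

Lemma limit_approx x : `|A x - phi x| <= M / (1 - q) * rho (enorm x).
Proof. by have := A_approx x 0; rewrite dyadic_rescaling0 expr0 mulr1. Qed.

Lemma limit_additive : {morph A : x y / x + y}.
Proof.
move=> x y; pose L := enorm x + enorm y + 1.
have := enorm_ge0 x; have := enorm_ge0 y => y_ge0 x_ge0.
have L_x : enorm x < L by rewrite /L; lra.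
have L_y : enorm y <= L by rewrite /L; lra.
have L_gt0 : 0 < L by rewrite /L; lra.
pose c (z : 'rV[R]_d) := M / (1 - q) * rho (enorm z).
suff : A (x + y) - A x - A y = 0 by lra.
apply: (@geometric_bound_eq0 _ _ (c (x + y) + c x + c y + M * rho L) q).
  by rewrite q_ge0 q_lt1.
move=> n; rewrite !(mulrDl _ _ (q ^+ n)).
by apply: (ler_dist_defect _ _ _ (dyadic_rescaling_defect n L_gt0 L_x L_y)).
Qed.

Lemma limit_scale x t : A (t *: x) = t * A x.
Proof.
rewrite -{2}[x]scale1r.
apply: (@additive_bounded_linear _ (fun t => A (t *: x))
          (H * enorm x `^ alpha + M / (1 - q) * rho (enorm x))).
  by move=> s u /=; rewrite scalerDl limit_additive.
move=> s /andP[s0 s1] /=.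
have sx : enorm (s *: x) <= enorm x by rewrite enormZ ger0_norm // ler_piMl ?enorm_ge0.
have mono r : 0 <= r -> enorm (s *: x) `^ r <= enorm x `^ r.
  by move=> r0; apply: ge0_ler_powR; rewrite ?nnegrE ?enorm_ge0.
have Mq_ge0 : 0 <= M / (1 - q) by rewrite divr_ge0 // subr_ge0 ltW.
rewrite -(subrK (phi (s *: x)) (A (s *: x))) addrC.
apply: le_trans (ler_normD _ _) (lerD _ _).
  exact: le_trans (phi_holder _) (ler_wpM2l H_ge0 (mono _ alpha_ge0)).
apply: le_trans (limit_approx _) (ler_wpM2l Mq_ge0 (mono _ _)).
by rewrite mulr_ge0.
Qed.

Lemma limit_linear x : A x = \sum_(j < d) x 0 j * A (delta_mx 0 j).
Proof.
have A0 : A 0 = 0 by rewrite -(scale0r (0 : 'rV[R]_d)) limit_scale mul0r.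
rewrite {1}(row_sum_delta x) (big_morph A limit_additive A0).
by apply: eq_bigr => j _; rewrite limit_scale.
Qed.

End Limit.

Lemma approx_additive_near_linear : exists a : 'rV[R]_d, forall x,
  `|phi x - \sum_(j < d) x 0 j * a 0 j| <= M / (1 - q) * rho (enorm x).
Proof.
have [A A_approx] := dyadic_rescaling_limit.
exists (\row_j A (delta_mx 0 j)) => x; rewrite distrC.
under eq_bigr do rewrite mxE.
by rewrite -limit_linear // limit_approx.
Qed.

End ApproximatelyAdditive.

Section DirectionalDerivatives.
Variables (R : numFieldType) (V W : normedModType R).
Implicit Types (f : V -> W) (p u x y v : V).

Lemma derive_comp_shift f y x v : 'D_v (f \o shift y) x = 'D_v f (x + y).
Proof. by rewrite /derive /= /shift; under eq_fun do rewrite -addrA. Qed.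

Let line_shift p u (t h : R) : p + (h * 1 + t) *: u = h *: u + (p + t *: u).
Proof. by rewrite mulr1 scalerDl addrCA. Qed.

Lemma derive_line f p u (t : R) :
  'D_1 (fun s : R => f (p + s *: u)) t = 'D_u f (p + t *: u).
Proof. by rewrite /derive /= /shift; under eq_fun do rewrite line_shift. Qed.

Lemma derivable_line f p u (t : R) :
  derivable f (p + t *: u) u -> derivable (fun s : R => f (p + s *: u)) t 1.
Proof.
by move=> dfu; rewrite /derivable /= /shift; under eq_fun do rewrite line_shift.
Qed.

Lemma is_derive_line f p u (t : R) : differentiable f (p + t *: u) ->
  is_derive t 1 (fun s : R => f (p + s *: u)) ('d f (p + t *: u) u).
Proof.
move=> df; rewrite -deriveE // -derive_line.
exact/derivableP/derivable_line/diff_derivable.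
Qed.

End DirectionalDerivatives.

Section Gradient.
Variables (R : realType) (d : nat).
Implicit Types (f : 'rV[R]_d -> R) (p x y : 'rV[R]_d).

Lemma differentiable_comp_shift f y x :
  differentiable f (x + y) -> differentiable (f \o shift y) x.
Proof. by move=> df; apply: differentiable_comp => //. Qed.

Lemma grad_fdelta f y x : differentiable f x -> differentiable f (x + y) ->
  grad (fdelta y f) x = grad f (x + y) - grad f x.
Proof.
move=> dfx dfxy; have dfy := differentiable_comp_shift dfxy.
have dfd : differentiable (f \o shift y - f) x := differentiableB dfy dfx.
apply/rowP => i; rewrite !mxE; apply: etrans (esym (deriveE _ dfd)) _.
rewrite deriveB ?derive_comp_shift; try exact: diff_derivable.
by rewrite !deriveE.
Qed.

Lemma is_derive_line_grad f p i (t : R) : differentiable f (p + t *: delta_mx 0 i) ->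
  is_derive t 1 (fun s => f (p + s *: delta_mx 0 i)) (grad f (p + t *: delta_mx 0 i) 0 i).
Proof. by move=> df; rewrite mxE; exact: is_derive_line. Qed.

End Gradient.

Section SymmetricLinearization.
Variables (R : realType) (d : nat) (f : 'rV[R]_d -> R) (x' : 'rV[R]_d).
Variables (B : 'M[R]_d) (K alpha : R).
Hypotheses (alpha_gt : 2^-1 < alpha) (K_ge0 : 0 <= K) (df : forall x, differentiable f x).
Hypothesis grad_approx : forall i z,
  `|grad f (x' + z) 0 i - grad f x' 0 i - (z *m B^T) 0 i| <= K * enorm z `^ (2 * alpha).

Local Notation e i := (delta_mx 0 i : 'rV[R]_d).
Local Notation rho t := (t `^ (2 * alpha)).

Let rho_ge0_le (a b : R) : 0 <= a -> a <= b -> rho a <= rho b.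
Proof.
move=> a0 ab; have two_alpha_ge0 : 0 <= 2 * alpha by have := alpha_gt; lra.
by apply: ge0_ler_powR => //; rewrite nnegrE // (le_trans a0).
Qed.

Let enorm_le_double_step i j (s c : R) : 0 <= c -> c <= s ->
  enorm (s *: e j + c *: e i) <= 2 * s /\ enorm (c *: e i) <= 2 * s.
Proof.
move=> c0 cs; have s0 := le_trans c0 cs.
have := l1normD (s *: e j) (c *: e i); rewrite !l1normZ !l1norm_delta !mulr1.
rewrite !ger0_norm // => l1_le.
split; apply: le_trans (enorm_le_l1norm _) _; first by apply: le_trans l1_le _; lra.
by rewrite l1normZ l1norm_delta mulr1 ger0_norm //; lra.
Qed.

Let ler_dist_diff (g1 g2 g0 w b k1 k2 : R) :
  `|g1 - g0 - (w + b)| <= k1 -> `|g2 - g0 - w| <= k2 -> `|g1 - g2 - b| <= k1 + k2.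
Proof. by rewrite !ler_norml => /andP[? ?] /andP[? ?]; apply/andP; split; lra. Qed.

Lemma second_difference_approx i j (s : R) : 0 < s ->
  `|f (x' + s *: e j + s *: e i) - f (x' + s *: e i) - f (x' + s *: e j) + f x'
     - s ^+ 2 * B i j| <= s * (2 * K * rho (2 * s)).
Proof.
move=> s0; set p := x' + s *: e j.
pose g t := f (p + t *: e i) - f (x' + t *: e i).
pose dg t := grad f (p + t *: e i) 0 i - grad f (x' + t *: e i) 0 i.
have g_der (t : R) : is_derive t (1 : R) g (dg t).
  by apply: is_deriveB; exact: is_derive_line_grad.
have [c] := MVT s0 (fun t _ => g_der t)
  (derivable_within_continuous (fun t _ => @ex_derive _ _ _ _ _ _ _ (g_der t))).
rewrite in_itv /= => /andP[c0 cs] gsc.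
have -> : f (p + s *: e i) - f (x' + s *: e i) - f p + f x' = g s - g 0.
  by rewrite /g !scale0r !addr0; lra.
rewrite gsc subr0 -[X in `|X - _|]mulrC expr2 -mulrA -mulrBr normrM gtr0_norm //.
rewrite ler_pM2l //.
have [z1_le z2_le] := enorm_le_double_step i j (ltW c0) (ltW cs).
have z1B : ((s *: e j + c *: e i) *m B^T) 0 i = (c *: e i *m B^T) 0 i + s * B i j.
  by rewrite mulmxDl mxE addrC; congr (_ + _); rewrite -scalemxAl mxE -rowE !mxE.
have := grad_approx i (s *: e j + c *: e i); rewrite z1B addrA -/p => approx1.
apply: le_trans (ler_dist_diff approx1 (grad_approx i (c *: e i))) _.
apply: le_trans (lerD (ler_wpM2l K_ge0 (rho_ge0_le (enorm_ge0 _) z1_le))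
                      (ler_wpM2l K_ge0 (rho_ge0_le (enorm_ge0 _) z2_le))) _.
by rewrite -mulrA [X in _ <= X]mulrDl mul1r.
Qed.

Let ler_dist_common (a u v T : R) : `|a - u| <= T -> `|a - v| <= T -> `|u - v| <= T + T.
Proof. by move=> au av; apply: le_trans (ler_distD a u v) _; rewrite distrC lerD. Qed.

(* At scale s = 2^-n both mixed second differences are the same number. *)
Lemma grad_linearization_sym : B^T = B.
Proof.
apply/matrixP => i j; rewrite mxE; apply/eqP; rewrite -subr_eq0; apply/eqP.
apply: (@geometric_bound_eq0 _ _ (4 * K * rho 2) (holder_ratio alpha)).
  by rewrite holder_ratio_ge0 holder_ratio_lt1.
move=> n; pose s : R := 2^-1 ^+ n.
have s0 : 0 < s by rewrite exprn_gt0 // invr_gt0.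
have := second_difference_approx i j s0; have := second_difference_approx j i s0.
rewrite (addrAC x' (s *: e i)) (addrAC _ (- f (x' + s *: e j))) => sji sij.
have := ler_dist_common sji sij.
rewrite -mulrBr normrM gtr0_norm ?exprn_gt0 // => Bs.
rewrite -(ler_pM2l (exprn_gt0 2 s0)); apply: le_trans Bs _.
have s2n : s * 2 ^+ n = 1 by rewrite /s -exprMn mulVf ?pnatr_eq0 // expr1n.
rewrite powRM ?(ltW s0) // holder_ratio_exprn -/s.
have -> : s ^+ 2 * (4 * K * rho 2 * (2 ^+ n * rho s)) =
  s * 2 ^+ n * (s * (2 * K * (rho 2 * rho s)) + s * (2 * K * (rho 2 * rho s))) by ring.
by rewrite s2n mul1r.
Qed.

End SymmetricLinearization.

Section Quantities.
Variables (R : realType) (d : nat) (alpha : R) (f : 'rV[R]_d -> R) (x' : 'rV[R]_d).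

Hypothesis alpha_gt : 2^-1 < alpha.

Let two_alpha_ge0 : 0 <= 2 * alpha. Proof. by have := alpha_gt; lra. Qed.

Local Notation rho t := (t `^ (2 * alpha)).

Lemma ball_supnorm_ge0 (F : 'rV[R]_d -> 'rV[R]_d) r : 0 < r ->
  (0 <= ball_supnorm F x' r)%E.
Proof.
move=> r0; apply: (@le_trans _ _ (enorm (F x'))%:E); first by rewrite lee_fin enorm_ge0.
by apply: ereal_sup_ubound; exists x' => //=; rewrite subrr enorm0.
Qed.

Lemma rhs_quantity_ge0 : (0 <= rhs_quantity alpha f x')%E.
Proof.
apply: le_trans (ereal_sup_ubound (ex_intro2 _ _ 1 ltr01 erefl)).
rewrite mule_ge0 ?lee_fin ?invr_ge0 ?powR_ge0 //.
have norm0_le1 : enorm (0 : 'rV[R]_d) <= 1 by rewrite enorm0 ler01.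
apply: le_trans (ereal_sup_ubound (ex_intro2 _ _ 0 norm0_le1 erefl)).
by apply: le_ereal_inf_tmp => _ [k _ <-]; exact: ball_supnorm_ge0.
Qed.

Section BoundedRhs.
Variable M : R.
Hypothesis rhs_le : (rhs_quantity alpha f x' <= M%:E)%E.

Lemma rhs_quantity_le_approx l y (eta : R) : 0 < l -> enorm y <= l -> 0 < eta ->
  exists k, forall x, enorm (x - x') < l ->
    enorm (grad (fdelta y f) x - k) <= M * rho l + eta.
Proof.
move=> l0 yl eta0.
pose Sy := ereal_inf ((fun k => ball_supnorm (fun x => grad (fdelta y f) x - k) x' l)
                      @` [set: 'rV[R]_d]).
have rl : 0 < rho l by rewrite powR_gt0.
have Sy_le : (Sy <= (M * rho l)%:E)%E.
  have : (((rho l)^-1)%:E * Sy <= M%:E)%E.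
    apply: le_trans rhs_le; apply: le_trans (ereal_sup_ubound (ex_intro2 _ _ l l0 erefl)).
    apply: lee_wpmul2l; first by rewrite lee_fin invr_ge0 ltW.
    exact: ereal_sup_ubound (ex_intro2 _ _ y yl erefl).
  by rewrite lee_pdivrMl // -EFinM mulrC.
have Sy_fin : Sy \is a fin_num.
  rewrite ge0_fin_numE ?(le_lt_trans Sy_le) ?ltry //.
  by apply: le_ereal_inf_tmp => _ [k _ <-]; exact: ball_supnorm_ge0.
have [_ [k _ <-] k_lt] := lb_ereal_inf_adherent eta0 Sy_fin.
exists k => x xl; rewrite -lee_fin.
have k_le : (Sy + eta%:E <= (M * rho l + eta)%:E)%E by rewrite EFinD leeD2r.
apply/ltW/(lt_le_trans _ k_le)/(le_lt_trans _ k_lt).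
by apply: ereal_sup_ubound; exists x.
Qed.

Let ler_dist_via (a b c T e : R) :
  `|a - c| <= T + e / 2 -> `|b - c| <= T + e / 2 -> `|a - b| <= 2 * T + e.
Proof. by rewrite !ler_norml => /andP[? ?] /andP[? ?]; apply/andP; split; lra. Qed.

Lemma grad_oscillation l y x1 x2 i : (forall x, differentiable f x) ->
  0 < l -> enorm y <= l -> enorm (x1 - x') < l -> enorm (x2 - x') < l ->
  `|grad f (x1 + y) 0 i - grad f x1 0 i - (grad f (x2 + y) 0 i - grad f x2 0 i)|
    <= 2 * M * rho l.
Proof.
move=> df l0 yl x1l x2l; rewrite -mulrA; apply/ler_addgt0Pr => eta eta0.
have [k k_approx] := rhs_quantity_le_approx l0 yl (divr_gt0 eta0 (ltr0n R 2)).
have := k_approx x1 x1l; have := k_approx x2 x2l.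
rewrite !grad_fdelta // => k2 k1.
exact: ler_dist_via (le_trans (ler_coord_dist3 _ _ _ i) k1)
                    (le_trans (ler_coord_dist3 _ _ _ i) k2).
Qed.

Let ler_dist_translate (a b c e T : R) :
  `|a - b - (e - c)| <= T -> `|a - c - (b - c) - (e - c)| <= T.
Proof. by have -> : a - c - (b - c) - (e - c) = a - b - (e - c) by ring. Qed.

Hypothesis M_ge0 : 0 <= M.
Hypotheses (df : forall x, differentiable f x) (holder : grad_holder alpha f).

Lemma rhs_bound_symmetric_linearization : exists B : 'M[R]_d, B^T = B /\
  forall i z, `|grad f (x' + z) 0 i - grad f x' 0 i - (z *m B^T) 0 i|
                <= 2 * M / (1 - holder_ratio alpha) * rho (enorm z).
Proof.
have [Mh grad_holder_Mh] := holder.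
have coord_approx i : exists a : 'rV[R]_d, forall z,
    `|grad f (x' + z) 0 i - grad f x' 0 i - \sum_(j < d) z 0 j * a 0 j|
      <= 2 * M / (1 - holder_ratio alpha) * rho (enorm z).
  apply: (approx_additive_near_linear (H := `|Mh|) alpha_gt _ (normr_ge0 Mh)).
  - by rewrite mulr_ge0.
  - by rewrite addr0 subrr.
  - move=> z; apply: le_trans (ler_coord_dist _ _ i) _.
    apply: le_trans (grad_holder_Mh _ _) _.
    by rewrite (addrC x' z) addrK ler_wpM2r ?powR_ge0 ?ler_norm.
  - move=> l x y l0 xl yl; rewrite (addrA x' x y); apply: ler_dist_translate.
    apply: grad_oscillation => //; first by rewrite (addrC x' x) addrK.
    by rewrite subrr enorm0.
have [a a_approx] := boolp.choice coord_approx.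
pose B : 'M[R]_d := \matrix_(i, j) a i 0 j.
have B_approx i z : `|grad f (x' + z) 0 i - grad f x' 0 i - (z *m B^T) 0 i|
                      <= 2 * M / (1 - holder_ratio alpha) * rho (enorm z).
  have -> : (z *m B^T) 0 i = \sum_(j < d) z 0 j * a i 0 j.
    by rewrite mxE; apply: eq_bigr => j _; rewrite !mxE.
  exact: a_approx.
exists B; split => //; apply: grad_linearization_sym B_approx => //.
by rewrite !divr_ge0 ?mulr_ge0 // subr_ge0 ltW ?holder_ratio_lt1.
Qed.

End BoundedRhs.

Lemma lhs_quantity_le_linearization (B : 'M[R]_d) (K : R) : B^T = B -> 0 <= K ->
  (forall i z, `|grad f (x' + z) 0 i - grad f x' 0 i - (z *m B^T) 0 i|
                 <= K * rho (enorm z)) ->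
  (lhs_quantity alpha f x' <= (d%:R * K)%:E)%E.
Proof.
move=> Bsym K_ge0 B_approx; apply: ge_ereal_sup => _ [r r0 <-].
have rho_r : 0 < rho r by rewrite powR_gt0.
have B_ball : (ball_supnorm (fun x => grad f x - ((x - x') *m B^T + grad f x'))%R x' r
                 <= (d%:R * (K * rho r))%:E)%E.
  apply: ge_ereal_sup => _ [x xr <-]; rewrite lee_fin.
  apply: enorm_le_coord => i; rewrite coord_sub_add.
  have := B_approx i (x - x'); rewrite (addrC x' (x - x')) subrK => /le_trans; apply.
  rewrite ler_wpM2l //; apply: (ge0_ler_powR two_alpha_ge0);
  by rewrite ?nnegrE ?enorm_ge0 ?ltW.
have B_inf : (ereal_inf ((fun Bb : 'M[R]_d * 'rV[R]_d =>
    ball_supnorm (fun x => grad f x - ((x - x') *m Bb.1^T + Bb.2))%R x' r)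
      @` [set Bb | Bb.1^T = Bb.1]) <= (d%:R * (K * rho r))%:E)%E.
  by apply: le_trans B_ball; apply: ereal_inf_lbound; exists (B, grad f x').
apply: le_trans (lee_wpmul2l _ B_inf) _; first by rewrite lee_fin invr_ge0 ltW.
by rewrite -EFinM lee_fin mulrC -!mulrA mulfV ?mulr1 ?gt_eqF.
Qed.

End Quantities.

Unset Implicit Arguments.

Theorem proposition1 (R : realType) (d : nat) (alpha : R) :
  2^-1 < alpha < 1 ->
  exists C : R, 0 < C /\
    forall (x' : 'rV[R]_d) (f : 'rV[R]_d -> R),
      (forall x, differentiable f x) ->
      grad_holder alpha f ->
      (lhs_quantity alpha f x' <= C%:E * rhs_quantity alpha f x')%E.
Proof.
move=> /andP[alpha_gt _]; set q := holder_ratio alpha.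
have q_lt1 : q < 1 := holder_ratio_lt1 alpha_gt.
pose C := (d%:R + 1) * (2 / (1 - q)).
have q_gap : 0 < 1 - q by rewrite subr_gt0.
have d1_gt0 : 0 < d%:R + 1 :> R by have := ler0n R d; lra.
have C_gt0 : 0 < C by rewrite mulr_gt0 ?divr_gt0.
exists C; split => // x' f df holder.
have := rhs_quantity_ge0 alpha f x'.
case rhs: (rhs_quantity alpha f x') => [M| |] //; last by rewrite gt0_muley ?leey.
rewrite lee_fin => M_ge0; have rhs_le : (rhs_quantity alpha f x' <= M%:E)%E by rewrite rhs.
have K_ge0 : 0 <= 2 * M / (1 - q) by rewrite divr_ge0 ?mulr_ge0 // ltW.
have [B [B_sym B_approx]] :=
  rhs_bound_symmetric_linearization alpha_gt rhs_le M_ge0 df holder.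
apply: le_trans (lhs_quantity_le_linearization alpha_gt B_sym K_ge0 B_approx) _.
by rewrite -EFinM lee_fin /C -[_ * _ * M]mulrA [2 / _ * M]mulrAC ler_wpM2r ?lerDl.
Qed.
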